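(* Let $p\ge 5$ be a prime and $k$ an integer with $1\le k\le \frac{p-3}{2}$, and put $t=p-1-2k$. Then, modulo $p$, \[ (-1)^k 4^{2k-1} E_t \equiv 4^t S_t(0, \tfrac{1}{16}) + 2^t S_t(\tfrac{3}{8}, \tfrac{7}{16}) + (2^t + 4^t) S_t(\tfrac{7}{16}, \tfrac{1}{2}). \]
   Context: $E_n$ denotes the $n$th Euler number, defined by $\sec z=\sum_{n\ge0}E_n\frac{z^n}{n!}$ (so $E_2=1$, $E_4=5$). For a prime $p$, an integer $\ell$ and real numbers $0\le x<y\le 1$, $S_\ell(x,y)=\sum_{xp<s<yp} s^\ell$, the sum over integers $s$ strictly between $xp$ and $yp$. Congruences between rational numbers modulo $p$ mean that the difference has $p$-adic valuation at least $1$. *)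

From mathcomp Require Import all_boot all_order all_algebra.
Set Implicit Arguments. Unset Strict Implicit. Unset Printing Implicit Defensive.
Import Order.TTheory GRing.Theory Num.Theory.
Local Open Scope ring_scope.

(* Euler numbers via sec z = sum E_n z^n / n!, i.e. cos z * sec z = 1:
   sum_{j=0}^{n/2} (-1)^j C(n,2j) E_{n-2j} = [n == 0]. *)
Definition euler_next (n : nat) (s : seq int) : int :=
  \sum_(1 <= j < n./2.+1) (-1) ^+ j.+1 * ('C(n, j.*2))%:Z * nth 0 s (n - j.*2).

Fixpoint eulers (n : nat) : seq int :=
  match n with
  | 0 => [:: 1]
  | m.+1 => let s := eulers m in rcons s (euler_next m.+1 s)
  end.

Definition euler (n : nat) : int := nth 0 (eulers n) n.

(* S_l(x,y) = sum over integers s with x p < s < y p of s^l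
   (for 0 <= x < y <= 1 all such s lie in [0, p]). *)
Definition Ssum (p l : nat) (x y : rat) : int :=
  \sum_(0 <= s < p.+1 | (x * p%:R < s%:R) && (s%:R < y * p%:R)) (s%:Z) ^+ l.




Lemma euler_3 : euler 3 = 0. Proof. by rewrite /euler /= /euler_next !unlock. Qed.
Lemma euler_4 : euler 4 = 5. Proof. by rewrite /euler /= /euler_next !unlock. Qed.
Lemma euler_6 : euler 6 = 61. Proof. by rewrite /euler /= /euler_next !unlock. Qed.

From mathcomp Require Import all_boot all_order all_algebra zify ring.
Set Implicit Arguments. Unset Strict Implicit. Unset Printing Implicit Defensive.
Import Order.TTheory GRing.Theory Num.Theory.
Local Open Scope ring_scope.

(* Write p = 2m + 1 and t = 2h, and compute in a field of characteristic p.
   The sequence 2 (-1)^h A(2h), where A(n) = sum_{i<m} (-1)^i (2i+1)^n,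
   satisfies the recurrence of cos z * sec z = 1 (binomial expansion plus a
   telescoping sum, using 2m = -1), hence equals E_{2h}.  Since
   2i + 1 = -2(m - i), A(2h) is (-1)^m 4^h times the alternating sum of the
   s^{2h} over s <= m; as sum_{s <= m} s^{2h} = 0 for 0 < 2h < p - 1, that
   alternating sum is twice the sum over even s, i.e. 2 * 4^h * S_t(0, 1/4).
   Finally every s <= p is 2j or p - 2j with j <= m, and s^{2h} = 4^h j^{2h}
   in both cases; two such halvings cut S_t(0, 1/4) into the three sums of
   the statement, and 2^{p-1} = 1 absorbs the remaining powers of 2. *)

Lemma size_eulers n : size (eulers n) = n.+1.
Proof. by elim: n => //= n IHn; rewrite size_rcons IHn. Qed.

Lemma nth_eulers n i : (i <= n)%N -> nth 0 (eulers n) i = euler i.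
Proof.
elim: n => [|n IHn]; first by rewrite leqn0 => /eqP ->.
rewrite leq_eqVlt => /predU1P[-> //|lt_in].
by rewrite /= nth_rcons size_eulers lt_in IHn.
Qed.

Lemma eulerS n : euler n.+1 =
  \sum_(1 <= j < n.+1./2.+1) (-1) ^+ j.+1 * 'C(n.+1, j.*2)%:Z * euler (n.+1 - j.*2).
Proof.
rewrite {1}/euler /= nth_rcons size_eulers ltnn eqxx /euler_next.
by apply: eq_big_nat => -[//|j] _; rewrite nth_eulers // doubleS subSS leq_subr.
Qed.

Lemma euler_even_unique (R : pzRingType) (a : nat -> R) : a 0 = 1 ->
    (forall h, (0 < h)%N ->
       \sum_(0 <= j < h.+1) (-1) ^+ j * 'C(h.*2, j.*2)%:R * a (h - j)%N = 0) ->
  forall h, a h = (euler h.*2)%:~R.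
Proof.
move=> a0 rec_a; elim/ltn_ind=> -[_|h IHh]; first by rewrite a0.
have /eqP := rec_a h.+1 isT.
rewrite big_ltn // expr0 mul1r subn0 bin0 mul1r addr_eq0 => /eqP->.
rewrite doubleS eulerS -doubleS doubleK rmorph_sum -sumrN.
apply: eq_big_nat => j /andP[j_gt0 j_le].
rewrite !rmorphM /= rmorph_sign IHh -?doubleB; last by lia.
by rewrite exprS mulN1r !mulNr.
Qed.

Lemma sign_double (R : pzRingType) n : (-1) ^+ n.*2 = 1 :> R.
Proof. by rewrite -signr_odd odd_double. Qed.

Lemma big_nat_even_odd (V : nmodType) n (F : nat -> V) :
  \sum_(0 <= i < n) F i =
  \sum_(0 <= j < uphalf n) F j.*2 + \sum_(0 <= j < n./2) F j.*2.+1.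
Proof.
elim: n => [|n IHn]; first by rewrite !big_geq ?addr0.
rewrite big_nat_recr //= IHn uphalf_half.
have [odd_n | even_n] := boolP (odd n); rewrite /= ?add0n ?add1n.
  rewrite [X in _ = _ + X]big_nat_recr //= addrA; congr (_ + F _).
  by rewrite -[LHS]odd_double_half odd_n.
by rewrite [in RHS]big_nat_recr //= even_halfK // addrAC.
Qed.

Lemma exprD1n_add_exprB1n (R : comPzRingType) (x : R) n :
  (x + 1) ^+ n + (x - 1) ^+ n =
  2 * \sum_(0 <= j < n./2.+1) 'C(n, j.*2)%:R * x ^+ (n - j.*2).
Proof.
rewrite !exprDn -big_split /=.
under eq_bigr => i _ do rewrite expr1n -mulrnDl -mulrDr.
rewrite -(big_mkord xpredT (fun i => x ^+ (n - i) * (1 + (-1) ^+ i) *+ 'C(n, i))).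
rewrite big_nat_even_odd /= [X in _ + X]big1 ?addr0 => [|j _]; last first.
  by rewrite exprS sign_double mulr1 addrN mulr0 mul0rn.
rewrite mulr_sumr; apply: eq_bigr => j _.
by rewrite sign_double -mulr_natr; ring.
Qed.

Definition alt_odd_powsum (R : pzRingType) m n : R :=
  \sum_(0 <= i < m) (-1) ^+ i * (i.*2.+1)%:R ^+ n.

Lemma alt_odd_powsum_binom (R : comPzRingType) m n :
  2 * \sum_(0 <= j < n./2.+1) 'C(n, j.*2)%:R * alt_odd_powsum R m (n - j.*2) =
  (n == 0)%:R - (-1) ^+ m * (m.*2)%:R ^+ n.
Proof.
transitivity (\sum_(0 <= i < m)
  (-1) ^+ i * (((i.*2.+1)%:R + 1) ^+ n + ((i.*2.+1)%:R - 1) ^+ n) : R).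
  under [RHS]eq_bigr => i _ do rewrite exprD1n_add_exprB1n !mulr_sumr.
  rewrite /alt_odd_powsum mulr_sumr; under [LHS]eq_bigr => j _ do rewrite !mulr_sumr.
  rewrite exchange_big; apply: eq_big_nat => i _; apply: eq_big_nat => j _; ring.
rewrite (telescope_sumr_eq (fun i => - ((-1) ^+ i * (i.*2)%:R ^+ n))) // => [|i _].
  by rewrite double0 expr0n mul1r opprK addrC.
by rewrite natr1 -[(i.*2.+1)%:R]natr1 addrK doubleS exprS; ring.
Qed.

Lemma alt_odd_powsum_reflect (R : comPzRingType) m n :
    (m.*2.+1)%:R = 0 :> R -> (0 < n)%N ->
  alt_odd_powsum R m n =
  (-1) ^+ m * (-2) ^+ n * \sum_(0 <= j < m.+1) (-1) ^+ j * j%:R ^+ n.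
Proof.
move=> p0 n_gt0; rewrite big_nat_recl // expr0n gtn_eqF // mulr0 add0r mulr_sumr.
rewrite /alt_odd_powsum big_nat_rev; apply: eq_big_nat => j /andP[_ j_lt]; rewrite add0n.
have -> : ((m - j.+1).*2.+1)%:R = -2 * j.+1%:R :> R.
  apply: (addIr (2 * j.+1%:R)); rewrite mulNr addNr -natrM -natrD -p0.
  by congr _%:R; lia.
have -> : (-1) ^+ (m - j.+1) = (-1) ^+ m * (-1) ^+ j.+1 :> R.
  by rewrite -[in RHS](subnK j_lt) exprD -mulrA -expr2 sqrr_sign mulr1.
by rewrite exprMn; ring.
Qed.

Section PowerSumsCharP.
Variables (K : fieldType) (p : nat).
Hypothesis charK : p \in [pchar K].

Lemma natr_neq0_charp n : (0 < n < p)%N -> n%:R != 0 :> K.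
Proof.
case/andP=> n_gt0 n_lt; rewrite -(dvdn_pcharf charK).
by apply/negP=> /(dvdn_leq n_gt0); lia.
Qed.

Lemma sum_expr_charp n : (n.+1 < p)%N -> \sum_(0 <= s < p) s%:R ^+ n = 0 :> K.
Proof.
elim/ltn_ind: n => n IHn n_lt.
have expand s : s.+1%:R ^+ n.+1 - s%:R ^+ n.+1 =
    \sum_(i < n.+1) s%:R ^+ i *+ 'C(n.+1, i) :> K.
  by rewrite -natr1 exprD1n big_ord_recr /= binn addrK.
have := telescope_sumr (fun s => s%:R ^+ n.+1 : K) (leq0n p).
rewrite (pcharf0 charK) expr0n subrr (eq_bigr _ (fun s _ => expand s)) exchange_big.
rewrite big_ord_recr /= big1 ?add0r => [|i _]; last first.
  by rewrite sumrMnl IHn ?mul0rn //=; have := ltn_ord i; lia.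
rewrite sumrMnl binSn -mulr_natr => /eqP; rewrite mulf_eq0 orbC.
by rewrite (negbTE (natr_neq0_charp _)) /= => [/eqP //|]; lia.
Qed.

Variable m : nat.
Hypothesis p_eq : p = m.*2.+1.

Lemma euler_even_charp h : (0 < h)%N ->
  (euler h.*2)%:~R = 2 * (-1) ^+ h * alt_odd_powsum K m h.*2.
Proof.
pose a h : K := if h is 0 then 1 else 2 * (-1) ^+ h * alt_odd_powsum K m h.*2.
case: h => // h _; rewrite -(@euler_even_unique _ a) // => {}h h_gt0.
have m2 : (m.*2)%:R = -1 :> K by apply/eqP; rewrite -addr_eq0 natr1 -p_eq (pcharf0 charK).
have binom := alt_odd_powsum_binom K m h.*2.
rewrite doubleK double_eq0 gtn_eqF // m2 sign_double mulr1 sub0r in binom.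
have binom0 := alt_odd_powsum_binom K m 0.
rewrite big_nat1 sub0n mul1r expr0 mulr1 /= in binom0.
rewrite big_nat_recr //= subnn binn mul1r in binom.
rewrite big_nat_recr //= subnn binn mulr1.
have -> : \sum_(0 <= j < h) (-1) ^+ j * 'C(h.*2, j.*2)%:R * a (h - j)%N =
    (-1) ^+ h * (2 * \sum_(0 <= j < h) 'C(h.*2, j.*2)%:R * alt_odd_powsum K m (h.*2 - j.*2)).
  rewrite !mulr_sumr; apply: eq_big_nat => j /andP[_ j_lt].
  rewrite /a -doubleB; case E: (h - j)%N => [|d]; first lia.
  have sign : (-1) ^+ h = (-1) ^+ j * (-1) ^+ (h - j) :> K.
    by rewrite -exprD subnKC // ltnW.
  by rewrite -E sign; ring.
by rewrite mulrDr binom0 in binom; rewrite (canRL (addrK _) binom); ring.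
Qed.

Lemma two_neq0_charp : 2 != 0 :> K.
Proof.
by apply: natr_neq0_charp; have := prime_gt1 (pcharf_prime charK); rewrite p_eq; lia.
Qed.

Lemma expr2_double_charp : 2 ^+ m.*2 = 1 :> K.
Proof.
apply: (mulfI two_neq0_charp); rewrite mulr1 -exprS -p_eq.
by rewrite -(pFrobenius_autE charK) (pFrobenius_aut_nat charK 2).
Qed.

Variable h : nat.
Hypothesis h_gt0 : (0 < h)%N.

Definition powsum (P : pred nat) : K := \sum_(0 <= s < p.+1 | P s) s%:R ^+ h.*2.

Lemma expr_even0 : 0%:R ^+ h.*2 = 0 :> K.
Proof. by rewrite expr0n double_eq0 gtn_eqF. Qed.

Lemma powsumE P :
  powsum P = \sum_(0 <= s < p.+1) (if P s then s%:R ^+ h.*2 else 0).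
Proof. exact: big_mkcond. Qed.

Lemma eq_powsum P Q : (forall s, (0 < s <= p)%N -> P s = Q s) -> powsum P = powsum Q.
Proof.
move=> PQ; rewrite !powsumE; apply: eq_big_nat => -[_|s /andP[_ s_le]].
  by rewrite expr_even0 !if_same.
by rewrite PQ.
Qed.

Lemma powsum_split R P Q :
    (forall s, (0 < s <= p)%N -> R s = P s || Q s) ->
    (forall s, (0 < s <= p)%N -> ~~ (P s && Q s)) ->
  powsum R = powsum P + powsum Q.
Proof.
move=> RPQ PQ; rewrite !powsumE -big_split /=.
apply: eq_big_nat => -[_|s /andP[_ s_le]]; first by rewrite expr_even0 !if_same addr0.
rewrite RPQ //; move: (PQ s.+1 s_le).
by case: (P _); case: (Q _); rewrite ?addr0 ?add0r.
Qed.

Lemma expr_even_natrB s : (s <= p)%N -> (p - s)%:R ^+ h.*2 = s%:R ^+ h.*2 :> K.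
Proof. by move=> s_le; rewrite natrB // (pcharf0 charK) sub0r -mul2n !exprM sqrrN. Qed.

Lemma expr_even_natr_double j :
  (j.*2)%:R ^+ h.*2 = 2 ^+ h.*2 * j%:R ^+ h.*2 :> K.
Proof. by rewrite -mul2n natrM exprMn. Qed.

Lemma powsum_halve P : powsum P = 2 ^+ h.*2 *
  (powsum (fun j => P j.*2 && (j < m.+1)%N)
   + powsum (fun j => P (p - j.*2)%N && (j < m.+1)%N)).
Proof.
have m_le : (m.+1 <= p.+1)%N by rewrite p_eq; lia.
rewrite /powsum -!(big_nat_widen _ _ _ _ _ m_le) mulrDr !mulr_sumr.
rewrite big_mkcond {1}p_eq -[m.*2.+2]/((m.+1).*2) big_nat_even_odd uphalf_double doubleK.
rewrite -!big_mkcond; congr (_ + _).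
  by apply: eq_bigr => j _; rewrite expr_even_natr_double.
rewrite [LHS]big_nat_rev [LHS]big_mkcond [RHS]big_mkcond /=.
apply: eq_big_nat => j /andP[_ j_lt].
have -> : (0 + m.+1 - j.+1).*2.+1 = (p - j.*2)%N by rewrite p_eq; lia.
by case: (P _); rewrite ?mulr0 // expr_even_natrB ?expr_even_natr_double // p_eq; lia.
Qed.

Lemma powsum_quarter : powsum (fun s => (4 * s < p)%N) =
  (2 ^+ h.*2) ^+ 2 * powsum (fun s => (16 * s < p)%N)
  + 2 ^+ h.*2 * powsum (fun s => (3 * p < 8 * s) && (16 * s < 7 * p))%N
  + (2 ^+ h.*2 + (2 ^+ h.*2) ^+ 2) * powsum (fun s => (7 * p < 16 * s) && (2 * s < p))%N.
Proof.
have p2 := p_eq; rewrite -mul2n in p2.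
have split1 : powsum (fun s => (4 * s < p)%N) =
    powsum (fun s => (8 * s < p)%N) + powsum (fun s => (p < 8 * s) && (4 * s < p))%N.
  by apply: powsum_split => s _; lia.
have split2 : powsum (fun s => (8 * s < p)%N) =
    powsum (fun s => (16 * s < p)%N) + powsum (fun s => (p < 16 * s) && (8 * s < p))%N.
  by apply: powsum_split => s _; lia.
have halve1 : powsum (fun s => (8 * s < p)%N) = 2 ^+ h.*2 *
    (powsum (fun s => (16 * s < p)%N) + powsum (fun s => (7 * p < 16 * s) && (2 * s < p))%N).
  by rewrite powsum_halve; congr (_ * (_ + _)); apply: eq_powsum => s _; rewrite -!mul2n; lia.
have halve2 : powsum (fun s => (p < 8 * s) && (4 * s < p))%N = 2 ^+ h.*2 *
    (powsum (fun s => (p < 16 * s) && (8 * s < p))%N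
     + powsum (fun s => (3 * p < 8 * s) && (16 * s < 7 * p))%N).
  by rewrite powsum_halve; congr (_ * (_ + _)); apply: eq_powsum => s _; rewrite -!mul2n; lia.
rewrite split1 halve2 (canRL (addKr _) (esym split2)) halve1; ring.
Qed.

Hypothesis h_small : (h.*2.+1 < p)%N.

Lemma sum_expr_half_charp : \sum_(0 <= s < m.+1) s%:R ^+ h.*2 = 0 :> K.
Proof.
have m_le : (m.+1 <= p.+1)%N by rewrite p_eq; lia.
have := powsum_halve predT; rewrite /powsum -!(big_nat_widen _ _ _ _ _ m_le).
rewrite [X in X = _]big_nat_recr //= (sum_expr_charp h_small) (pcharf0 charK).
rewrite expr_even0 addr0 -mulr2n => /esym/eqP.
rewrite mulf_eq0 expf_eq0 (negbTE two_neq0_charp) andbF -mulr_natr mulf_eq0.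
by rewrite (negbTE two_neq0_charp) orbF => /eqP.
Qed.

Lemma sum_sign_expr_half_charp :
  \sum_(0 <= j < m.+1) (-1) ^+ j * j%:R ^+ h.*2 =
  2 * 2 ^+ h.*2 * \sum_(0 <= i < m./2.+1) i%:R ^+ h.*2 :> K.
Proof.
have := sum_expr_half_charp; rewrite big_nat_even_odd /= => /(canRL (addKr _)).
rewrite addr0 => odd_part; rewrite big_nat_even_odd /=.
under [X in X + _]eq_bigr do rewrite sign_double mul1r.
under [X in _ + X]eq_bigr do rewrite exprS sign_double mulr1 mulN1r.
rewrite sumrN odd_part opprK -big_split /= -mulrA !mulr_sumr.
by apply: eq_bigr => i _; rewrite expr_even_natr_double; ring.
Qed.

Lemma euler_even_powsum_quarter : (euler h.*2)%:~R =
  4 * (-1) ^+ (h + m) * (2 ^+ h.*2) ^+ 2 * powsum (fun s => (4 * s < p)%N).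
Proof.
have p0 : (m.*2.+1)%:R = 0 :> K by rewrite -p_eq (pcharf0 charK).
have m_le : (m./2.+1 <= p.+1)%N by rewrite p_eq; lia.
rewrite euler_even_charp // alt_odd_powsum_reflect ?double_gt0 // sum_sign_expr_half_charp.
rewrite /powsum (big_nat_widen _ _ _ _ _ m_le) (eq_bigl (fun s => (4 * s < p)%N)) => [|s].
  have opp2 : (-2) ^+ h.*2 = 2 ^+ h.*2 :> K by rewrite -mul2n !exprM sqrrN.
  by rewrite opp2 exprD; ring.
by rewrite ltnS geq_half_double p_eq; lia.
Qed.


Lemma euler_even_quarter_charp k : m = (h + k)%N -> (0 < k)%N ->
  (-1) ^+ k * 4 ^+ (k.*2 - 1) * (euler h.*2)%:~R = powsum (fun s => (4 * s < p)%N).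
Proof.
move=> m_eq k_gt0; rewrite euler_even_powsum_quarter.
have sign : (-1) ^+ k * (-1) ^+ (h + m) = 1 :> K.
  by rewrite -exprD (_ : k + (h + m) = (h + k).*2)%N ?sign_double //; lia.
have four : 4 = 2 ^+ 2 :> K by rewrite expr2 -natrM.
have pow : 4 ^+ (k.*2 - 1) * 4 * (2 ^+ h.*2) ^+ 2 = 1 :> K.
  rewrite four -!exprM -!exprD (_ : _ + _ + _ = m.*2 * 2)%N; last by lia.
  by rewrite exprM expr2_double_charp expr1n.
transitivity ((-1) ^+ k * (-1) ^+ (h + m) * (4 ^+ (k.*2 - 1) * 4 * (2 ^+ h.*2) ^+ 2)
              * powsum (fun s => (4 * s < p)%N)); first by ring.
by rewrite sign pow !mul1r.
Qed.

End PowerSumsCharP.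

Lemma ltr_frac_natl (R : numFieldType) (a b p s : nat) : (0 < b)%N ->
  (a%:R / b%:R * p%:R < s%:R :> R) = (a * p < b * s)%N.
Proof. by move=> b_gt0; rewrite mulrAC ltr_pdivrMr ?ltr0n // -!natrM ltr_nat (mulnC b). Qed.

Lemma ltr_frac_natr (R : numFieldType) (a b p s : nat) : (0 < b)%N ->
  (s%:R < a%:R / b%:R * p%:R :> R) = (b * s < a * p)%N.
Proof. by move=> b_gt0; rewrite mulrAC ltr_pdivlMr ?ltr0n // -!natrM ltr_nat (mulnC b). Qed.

Lemma intr_Ssum (K : fieldType) p h (x y : rat) (P : pred nat) : (0 < h)%N ->
    (forall s, (0 < s <= p)%N -> (x * p%:R < s%:R) && (s%:R < y * p%:R) = P s) ->
  (Ssum p h.*2 x y)%:~R = powsum K p h P.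
Proof.
move=> h_gt0 xyP; rewrite -(eq_powsum _ h_gt0 xyP) rmorph_sum.
by apply: eq_bigr => s _; rewrite rmorphXn.
Qed.

Theorem mainTheorem5 (p k : nat) :
  prime p -> (5 <= p)%N -> (1 <= k)%N -> (k <= (p - 3)./2)%N ->
  let t := (p - 1 - k.*2)%N in
  (p%:Z %| (-1) ^+ k * 4 ^+ (k.*2 - 1) * euler t
      - (4 ^+ t * Ssum p t 0 (1 / 16)
         + 2 ^+ t * Ssum p t (3 / 8) (7 / 16)
         + (2 ^+ t + 4 ^+ t) * Ssum p t (7 / 16) (1 / 2)))%Z.
Proof.
move=> p_prime p_ge5 k_gt0 k_le /=.
have charFp := pchar_Fp p_prime.
set m := p./2; set h := (m - k)%N.
have p_eq : p = m.*2.+1.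
  have [p2 | p_odd] := even_prime p_prime; first by rewrite p2 in p_ge5.
  by rewrite -[LHS]odd_double_half p_odd add1n.
rewrite p_eq in k_le.
have h_gt0 : (0 < h)%N by rewrite /h; lia.
have h_small : (h.*2.+1 < p)%N by rewrite p_eq /h; lia.
have m_eq : m = (h + k)%N by rewrite /h; lia.
have -> : (p - 1 - k.*2 = h.*2)%N by rewrite p_eq /h; lia.
rewrite (dvdz_pcharf charFp) !rmorphB !rmorphD !rmorphM /= !rmorphXn /=.
rewrite rmorphN1 (intrD _ (2 ^+ h.*2)) !rmorphXn /=.
rewrite (euler_even_quarter_charp charFp p_eq h_gt0 h_small m_eq k_gt0).
rewrite (powsum_quarter charFp p_eq h_gt0) //.
rewrite (intr_Ssum _ h_gt0 (P := fun s => 16 * s < p)%N) => [|s /andP[s_gt0 _]]; last first.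
  by rewrite mul0r ltr0n s_gt0 (@ltr_frac_natr _ 1 16) ?mul1n.
rewrite (intr_Ssum _ h_gt0 (P := fun s => (3 * p < 8 * s) && (16 * s < 7 * p))%N)
  => [|s _]; last first.
  by rewrite ltr_frac_natl // ltr_frac_natr.
rewrite (intr_Ssum _ h_gt0 (P := fun s => (7 * p < 16 * s) && (2 * s < p))%N)
  => [|s _]; last first.
  by rewrite ltr_frac_natl // (@ltr_frac_natr _ 1 2) ?mul1n.
have four : (4 : int)%:~R = 2 ^+ 2 :> 'F_p by rewrite expr2 -natrM.
have two : (2 : int)%:~R = 2 :> 'F_p by [].
by rewrite four two -!exprM (mulnC 2) subrr.
Qed.
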